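(* Let $\mathcal{H}$ be a complex Hilbert space, let $A\in\mathcal{B}(\mathcal{H})$ be a nonzero positive operator, and let $\mathbb{A}=\begin{pmatrix}A&O\\O&A\end{pmatrix}$ on $\mathcal{H}\oplus\mathcal{H}$. Let $T,S\in\mathcal{B}_{A^{1/2}}(\mathcal{H})$. Then (i) $\omega_{\mathbb{A}}\left[\begin{pmatrix}T&S\\S&T\end{pmatrix}\right]=\max\{\omega_A(T+S),\omega_A(T-S)\}$; (ii) $\omega_{\mathbb{A}}\left[\begin{pmatrix}T&-S\\S&T\end{pmatrix}\right]=\max\{\omega_A(T+iS),\omega_A(T-iS)\}$.
   Context: For a positive operator $A$ on $\mathcal{H}$, $\langle x,y\rangle_A:=\langle Ax,y\rangle$ and $\|x\|_A:=\sqrt{\langle x,x\rangle_A}$. $\mathcal{B}_{A^{1/2}}(\mathcal{H})$ is the set of $T\in\mathcal{B}(\mathcal{H})$ such that $\|Tx\|_A\le\lambda\|x\|_A$ for some $\lambda>0$ and all $x\in\mathcal{H}$. For such $T$, $\omega_A(T):=\sup\{|\langle Tx,x\rangle_A|:x\in\mathcal{H},\|x\|_A=1\}$. $\omega_{\mathbb{A}}$ is defined the same way on $\mathcal{H}\oplus\mathcal{H}$ with the positive operator $\mathbb{A}$, i.e. $\langle (x_1,x_2),(y_1,y_2)\rangle_{\mathbb{A}}=\langle x_1,y_1\rangle_A+\langle x_2,y_2\rangle_A$. *)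

From HB Require Import structures.
From mathcomp Require Import all_boot all_order all_algebra.
From mathcomp Require Import all_classical reals.
From mathcomp Require Export complex.
Set Implicit Arguments. Unset Strict Implicit. Unset Printing Implicit Defensive.
Import Order.TTheory GRing.Theory Num.Theory.
Local Open Scope ring_scope.
Local Open Scope classical_set_scope.

Section Defs.
Variable R : realType.
Local Notation C := (R[i]).

Definition is_inner_product (V : lmodType C) (ip : V -> V -> C) : Prop :=
  [/\ forall (a : C) (x y z : V), ip (a *: x + y) z = a * ip x z + ip y z,
      forall x y : V, ip y x = (ip x y)^*,
      forall x : V, 0 <= ip x x &
      forall x : V, ip x x = 0 -> x = 0].

Definition ipnorm (W : Type) (ip : W -> W -> C) (x : W) : R :=
  Num.sqrt (complex.Re (ip x x)).

Definition ip_complete (V : lmodType C) (ip : V -> V -> C) : Prop :=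
  forall u : nat -> V,
    (forall e : R, 0 < e -> exists N, forall m n, (N <= m)%N -> (N <= n)%N ->
        ipnorm ip (u m - u n) < e) ->
    exists l : V, forall e : R, 0 < e -> exists N, forall n, (N <= n)%N ->
        ipnorm ip (u n - l) < e.

Definition bounded_op (V : lmodType C) (ip : V -> V -> C) (T : {linear V -> V}) :=
  exists c : R, forall x, ipnorm ip (T x) <= c * ipnorm ip x.

Definition positive_op (V : lmodType C) (ip : V -> V -> C) (A : {linear V -> V}) :=
  bounded_op ip A /\ forall x, 0 <= ip (A x) x.

Definition ipA (V : lmodType C) (ip : V -> V -> C) (A : V -> V) (x y : V) : C :=
  ip (A x) y.

Definition ipAA (V : lmodType C) (ip : V -> V -> C) (A : V -> V)
  (x y : V * V) : C := ipA ip A x.1 y.1 + ipA ip A x.2 y.2.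

Definition in_BA12 (V : lmodType C) (ip : V -> V -> C) (A : V -> V) (T : V -> V) :=
  exists2 l : R, 0 < l & forall x, ipnorm (ipA ip A) (T x) <= l * ipnorm (ipA ip A) x.

Definition omega (W : Type) (ipS : W -> W -> C) (T : W -> W) : R :=
  sup [set Normc.normc (ipS (T x) x) | x in [set x | ipnorm ipS x = 1]].

Definition opmx (V : lmodType C) (P Q U X : V -> V) : V * V -> V * V :=
  fun p => (P p.1 + Q p.2, U p.1 + X p.2).

End Defs.

From HB Require Import structures.
From mathcomp Require Import all_boot all_order all_algebra.
From mathcomp Require Import all_classical reals complex.
From mathcomp Require Import ring lra.
Import Order.TTheory GRing.Theory Num.Theory.
Local Open Scope complex_scope.
Local Open Scope ring_scope.

(* The map (u, v) |-> (u + v, u - v), resp. (u + v, -i (u - v)), is up to the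
   factor sqrt 2 a unitary from (H, <.,.>_A) (+) (H, <.,.>_A) onto (H (+) H, <.,.>_AA)
   which conjugates [[T, S], [S, T]], resp. [[T, -S], [S, T]], to the diagonal
   operator (T + S) (+) (T - S), resp. (T + iS) (+) (T - iS).  The numerical
   radius is invariant under such a conjugation, and that of a diagonal operator
   is the maximum of those of its blocks: the upper bound comes from
   |<P u, u> + <Q v, v>| <= max * (|u|^2 + |v|^2), the lower one from the vectors
   (u, 0) and (0, v).  As <.,.>_A may be degenerate, everything is done for
   positive semidefinite sesquilinear forms. *)


Local Notation normc := Normc.normc.

Section ComplexModulus.
Variable R : realType.
Implicit Types (z : R[i]) (r : R).

Lemma normr_normc z : `|z| = (normc z)%:C.
Proof. by case: z. Qed.

Lemma normc_ge0 z : 0 <= normc z.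
Proof. by case: z => a b; exact: sqrtr_ge0. Qed.

Lemma normc_real r : normc r%:C = `|r|.
Proof. by rewrite /= expr0n addr0 sqrtr_sqr. Qed.

Lemma normc_nat n : normc (n%:R : R[i]) = n%:R.
Proof. by rewrite -(rmorph_nat (real_complex R)) normc_real normr_nat. Qed.

End ComplexModulus.

Lemma exists_sum_scaled_diff {F : numFieldType} {V : lmodType F} (c : F) :
  c != 0 -> forall x1 x2 : V, exists u v, (x1, x2) = (u + v, c *: (u - v)).
Proof.
move=> c0 x1 x2; set y := c^-1 *: x2.
have half (z : V) : 2%:R^-1 *: (z + z) = z.
  by rewrite -mulr2n -scaler_nat scalerA mulVf ?pnatr_eq0 // scale1r.
exists (2%:R^-1 *: (x1 + y)), (2%:R^-1 *: (x1 - y)); congr pair.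
  by rewrite -scalerDr addrACA subrr addr0 half.
by rewrite -scalerBr opprB addrC addrA subrK half /y scalerA mulfV // scale1r.
Qed.

Definition is_positive_form {R : realType} {W : lmodType R[i]} (s : W -> W -> R[i]) :=
  [/\ forall (a : R[i]) x y z, s (a *: x + y) z = a * s x z + s y z,
      forall (a : R[i]) x y z, s x (a *: y + z) = a^* * s x y + s x z &
      forall x, 0 <= s x x].

Section PositiveForm.
Context {R : realType} {W : lmodType R[i]} {s : W -> W -> R[i]}.
Hypothesis hs : is_positive_form s.
Implicit Types (a : R[i]) (x y z : W).

Lemma formZDl a x y z : s (a *: x + y) z = a * s x z + s y z.
Proof. by case: hs. Qed.
Lemma formZDr a x y z : s x (a *: y + z) = a^* * s x y + s x z.
Proof. by case: hs. Qed.
Lemma form_ge0 x : 0 <= s x x.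
Proof. by case: hs. Qed.

Lemma formDl x y z : s (x + y) z = s x z + s y z.
Proof. by rewrite -[x]scale1r formZDl mul1r scale1r. Qed.
Lemma formDr x y z : s x (y + z) = s x y + s x z.
Proof. by rewrite -[y]scale1r formZDr conjC1 mul1r scale1r. Qed.
Lemma form0l z : s 0 z = 0.
Proof. by apply: (@addrI _ (s 0 z)); rewrite addr0 -formDl addr0. Qed.
Lemma form0r z : s z 0 = 0.
Proof. by apply: (@addrI _ (s z 0)); rewrite addr0 -formDr addr0. Qed.
Lemma formZl a x z : s (a *: x) z = a * s x z.
Proof. by rewrite -[a *: x]addr0 formZDl form0l addr0. Qed.
Lemma formZr a x z : s x (a *: z) = a^* * s x z.
Proof. by rewrite -[a *: z]addr0 formZDr form0r addr0. Qed.
Lemma formNl x z : s (- x) z = - s x z.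
Proof. by rewrite -scaleN1r formZl mulN1r. Qed.
Lemma formNr x z : s x (- z) = - s x z.
Proof. by rewrite -scaleN1r formZr rmorphN1 mulN1r. Qed.
Lemma formBl x y z : s (x - y) z = s x z - s y z.
Proof. by rewrite formDl formNl. Qed.
Lemma formBr x y z : s x (y - z) = s x y - s x z.
Proof. by rewrite formDr formNr. Qed.

Let conj_form_diag x : (s x x)^* = s x x.
Proof. exact/conj_Creal/ger0_real/form_ge0. Qed.

Let conj_mid x y (c : R[i]) : (s x x + c + s y y)^* = s x x + c + s y y -> c^* = c.
Proof. by rewrite !rmorphD /= !conj_form_diag => /addIr /addrI. Qed.

(* Hermitian symmetry is not an axiom of [is_positive_form]: over the complex
   field it follows from positivity, by polarization along [x + y] and [x + 'i y]. *)
Lemma form_conj x y : s y x = (s x y)^*.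
Proof.
set a := s x y; set b := s y x.
have e1 : (a + b)^* = a + b.
  apply: (conj_mid x y).
  have -> : s x x + (a + b) + s y y = s (x + y) (x + y).
    by rewrite !(formDl, formDr) -/a -/b; ring.
  exact: conj_form_diag.
have e2 : ('i * (b - a))^* = 'i * (b - a).
  apply: (conj_mid x y).
  have -> : s x x + 'i * (b - a) + s y y = s (x + 'i *: y) (x + 'i *: y).
    rewrite !(formDl, formDr, formZl, formZr) -/a -/b conjCi.
    by rewrite !mulrA mulrN -expr2 sqrCi; ring.
  exact: conj_form_diag.
have e3 : a^* - b^* = b - a.
  apply: (mulfI (neq0Ci _)); move: e2; rewrite rmorphM rmorphB /= conjCi => <-.
  ring.
apply: (@pmulrnI _ 2) => //.
transitivity ((a + b) + (b - a)); first ring.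
rewrite -e1 -e3 rmorphD; ring.
Qed.

Lemma form_Cauchy_Schwarz x y : `|s x y| *+ 2 <= s x x + s y y.
Proof.
set c := s x y; have [->|c0] := eqVneq c 0; first by rewrite normr0 mul0rn addr_ge0 ?form_ge0.
set n := `|c|; have n0 : n != 0 by rewrite normr_eq0.
have cc : c^* = n ^+ 2 / c by rewrite /n normCK mulrAC mulfV // mul1r.
have nr : n^* = n by apply/conj_Creal/normr_real.
rewrite -subr_ge0.
suff -> : s x x + s y y - n *+ 2 = s (x - (c / n) *: y) (x - (c / n) *: y) by exact: form_ge0.
rewrite formBl !formBr !formZl !formZr (form_conj x y) -/c rmorphM /= fmorphV /= nr cc.
by field; rewrite c0 n0.
Qed.

Definition sqnorm x := complex.Re (s x x).

Lemma sqnormE x : (sqnorm x)%:C = s x x.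
Proof. by rewrite /sqnorm RRe_real // ger0_real ?form_ge0. Qed.

Lemma sqnorm_ge0 x : 0 <= sqnorm x.
Proof. by rewrite -lecR sqnormE form_ge0. Qed.

Lemma sqnorm0 : sqnorm 0 = 0.
Proof. by apply: complexI; rewrite sqnormE form0l. Qed.

Lemma sqnormZ a x : sqnorm (a *: x) = normc a ^+ 2 * sqnorm x.
Proof.
by apply: complexI; rewrite rmorphM rmorphXn /= -normr_normc !sqnormE formZl formZr mulrA normCK.
Qed.

Lemma ipnorm_eq1 x : ipnorm s x = 1 <-> sqnorm x = 1.
Proof.
rewrite /ipnorm -/(sqnorm x); split=> [h|->]; last exact: sqrtr1.
by rewrite -[sqnorm x]sqr_sqrtr ?sqnorm_ge0 // h expr1n.
Qed.

Lemma normc_form_le x y : normc (s x y) *+ 2 <= sqnorm x + sqnorm y.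
Proof. by rewrite -lecR rmorphMn rmorphD /= !sqnormE -normr_normc form_Cauchy_Schwarz. Qed.

Lemma formZZ a x y : s (a *: x) (a *: y) = `|a| ^+ 2 * s x y.
Proof. by rewrite formZl formZr mulrA normCK. Qed.

Lemma normc_formZZ a x y : normc (s (a *: x) (a *: y)) = normc a ^+ 2 * normc (s x y).
Proof.
rewrite formZZ normr_normc -rmorphXn Normc.normcM normc_real.
by rewrite ger0_norm // exprn_ge0 // normc_ge0.
Qed.

Lemma form_sqnorm0r x y : sqnorm y = 0 -> s x y = 0.
Proof.
move=> y0; apply/eqP/negPn/negP => sxy0.
have sxy_gt0 : 0 < normc (s x y).
  by rewrite lt_def normc_ge0 andbT; apply: contra sxy0 => /eqP/Normc.eq0_normc ->.
set t := (sqnorm x + 1) / normc (s x y).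
have t_ge0 : 0 <= t by rewrite divr_ge0 ?addr_ge0 ?sqnorm_ge0 // ltW.
have := normc_form_le x (t%:C *: y).
rewrite sqnormZ y0 mulr0 addr0 formZr conj_Creal ?ger0_real ?ler0c // Normc.normcM normc_real.
rewrite ger0_norm // /t mulfVK ?gt_eqF //.
have := sqnorm_ge0 x; lra.
Qed.

Lemma sqnorm_normalize x :
  sqnorm x != 0 -> sqnorm ((Num.sqrt (sqnorm x))^-1%:C *: x) = 1.
Proof.
move=> x0; have x_gt0 : 0 < sqnorm x by rewrite lt_def x0 sqnorm_ge0.
rewrite sqnormZ normc_real ger0_norm ?invr_ge0 ?sqrtr_ge0 //.
by rewrite exprVn sqr_sqrtr ?sqnorm_ge0 // mulVf.
Qed.

Lemma exists_sqnorm_eq1 : (exists x, sqnorm x != 0) -> exists x, sqnorm x = 1.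
Proof. by case=> x x0; exists ((Num.sqrt (sqnorm x))^-1%:C *: x); exact: sqnorm_normalize. Qed.

Definition numrange_bounded (P : W -> W) :=
  exists B, forall x, sqnorm x = 1 -> normc (s (P x) x) <= B.

Lemma numrange_bounded_of_norm_le (T : W -> W) l :
  (forall x, ipnorm s (T x) <= l * ipnorm s x) -> numrange_bounded T.
Proof.
move=> hT; exists ((l ^+ 2 + 1) / 2) => x x1.
have := hT x; rewrite (proj2 (ipnorm_eq1 x) x1) mulr1 => Tx_le.
have Tx_ge0 : 0 <= ipnorm s (T x) by apply: sqrtr_ge0.
have : sqnorm (T x) = ipnorm s (T x) ^+ 2 by rewrite sqr_sqrtr // sqnorm_ge0.
have := normc_form_le (T x) x; rewrite x1; nra.
Qed.

Lemma numrange_bounded_addZ (T S P : W -> W) d :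
  (forall x, P x = T x + d *: S x) ->
  numrange_bounded T -> numrange_bounded S -> numrange_bounded P.
Proof.
move=> PE [BT hT] [BS hS]; exists (BT + normc d * BS) => x x1.
rewrite PE formDl formZl (le_trans (le_normcD _ _)) // Normc.normcM.
by rewrite lerD ?hT // ler_wpM2l ?normc_ge0 ?hS.
Qed.

Lemma normc_form_le_omega (P : W -> W) :
  numrange_bounded P -> (forall a x, P (a *: x) = a *: P x) ->
  forall x, normc (s (P x) x) <= omega s P * sqnorm x.
Proof.
move=> [B hB] PZ x; have [x0|x_neq0] := eqVneq (sqnorm x) 0.
  by rewrite x0 mulr0 form_sqnorm0r // Normc.normc0.
set r := Num.sqrt (sqnorm x); have r_gt0 : 0 < r.
  by rewrite sqrtr_gt0 lt_def x_neq0 sqnorm_ge0.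
have y1 := sqnorm_normalize x x_neq0; rewrite -/r in y1; set y := _ *: x in y1.
have : normc (s (P y) y) <= omega s P.
  apply: sup_upper_bound; last by exists y => //; apply/ipnorm_eq1.
  split; first by exists (normc (s (P y) y)); exists y => //; apply/ipnorm_eq1.
  by exists B => _ [z /ipnorm_eq1 z1 <-]; apply: hB.
rewrite /y PZ normc_formZZ normc_real ger0_norm ?invr_ge0 ?(ltW r_gt0) //.
by rewrite -[sqnorm x](sqr_sqrtr (sqnorm_ge0 x)) -/r exprVn mulrC ler_pdivrMr ?exprn_gt0.
Qed.

Lemma ge_omega (P : W -> W) c : (exists x, sqnorm x = 1) ->
  (forall x, normc (s (P x) x) <= c * sqnorm x) -> omega s P <= c.
Proof.
move=> [x x1] hc; apply: ge_sup.
  by exists (normc (s (P x) x)); exists x => //; apply/ipnorm_eq1.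
by move=> _ [y /ipnorm_eq1 y1 <-]; have := hc y; rewrite y1 mulr1.
Qed.

Lemma prod_positive_form : is_positive_form (fun x y : W * W => s x.1 y.1 + s x.2 y.2).
Proof.
split=> [a x y z | a x y z | x] /=; last by rewrite addr_ge0 ?form_ge0.
  by rewrite !formZDl; ring.
by rewrite !formZDr; ring.
Qed.

End PositiveForm.
Arguments sqnorm {R W} s x.
Arguments numrange_bounded {R W} s P.

Section DiagonalDecomposition.
Context {R : realType} {W1 W2 : lmodType R[i]}.
Context {s1 : W1 -> W1 -> R[i]} {s2 : W2 -> W2 -> R[i]}.
Hypotheses (hs1 : is_positive_form s1) (hs2 : is_positive_form s2).
Variables (P Q : W1 -> W1) (M : W2 -> W2) (phi : W1 -> W1 -> W2).
Hypotheses (P_bounded : numrange_bounded s1 P) (Q_bounded : numrange_bounded s1 Q).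
Hypothesis PZ : forall a x, P (a *: x) = a *: P x.
Hypothesis QZ : forall a x, Q (a *: x) = a *: Q x.
Hypothesis MZ : forall a x, M (a *: x) = a *: M x.
(* [phi / sqrt 2] is a unitary [W1 * W1 -> W2] conjugating [M] to [P (+) Q]; of
   this, only the two identities below on the diagonals of the forms are used. *)
Hypothesis phi_onto : forall x, exists u v, x = phi u v.
Hypothesis form_phi : forall u v,
  s2 (phi u v) (phi u v) = 2%:R * (s1 u u + s1 v v).
Hypothesis form_M_phi : forall u v,
  s2 (M (phi u v)) (phi u v) = 2%:R * (s1 (P u) u + s1 (Q v) v).
Hypothesis exists_unit : exists x, sqnorm s1 x = 1.

Let m := Num.max (omega s1 P) (omega s1 Q).

Lemma sqnorm_phi u v : sqnorm s2 (phi u v) = 2 * (sqnorm s1 u + sqnorm s1 v).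
Proof.
by apply: complexI; rewrite (sqnormE hs2) form_phi rmorphM rmorph_nat rmorphD /= !(sqnormE hs1).
Qed.

Lemma normc_form_M_le x : normc (s2 (M x) x) <= m * sqnorm s2 x.
Proof.
have [u [v ->]] := phi_onto x.
rewrite form_M_phi sqnorm_phi Normc.normcM normc_nat mulrCA ler_pM2l //.
apply: (le_trans (le_normcD _ _)); rewrite mulrDr lerD //.
  apply: (le_trans (normc_form_le_omega hs1 P P_bounded PZ u)).
  by rewrite ler_wpM2r ?(sqnorm_ge0 hs1) // le_max lexx.
apply: (le_trans (normc_form_le_omega hs1 Q Q_bounded QZ v)).
by rewrite ler_wpM2r ?(sqnorm_ge0 hs1) // le_max lexx orbT.
Qed.

Let M_bounded : numrange_bounded s2 M.
Proof. by exists m => x x1; have := normc_form_M_le x; rewrite x1 mulr1. Qed.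

Lemma omega_P_le_M : omega s1 P <= omega s2 M.
Proof.
apply: (ge_omega hs1) => // u; have := normc_form_le_omega hs2 M M_bounded MZ (phi u 0).
rewrite form_M_phi sqnorm_phi (form0r hs1) (sqnorm0 hs1) !addr0.
by rewrite Normc.normcM normc_nat mulrCA ler_pM2l.
Qed.

Lemma omega_Q_le_M : omega s1 Q <= omega s2 M.
Proof.
apply: (ge_omega hs1) => // v; have := normc_form_le_omega hs2 M M_bounded MZ (phi 0 v).
rewrite form_M_phi sqnorm_phi (form0r hs1) (sqnorm0 hs1) !add0r.
by rewrite Normc.normcM normc_nat mulrCA ler_pM2l.
Qed.

Theorem omega_eq_max_diag : omega s2 M = Num.max (omega s1 P) (omega s1 Q).
Proof.
apply/eqP; rewrite eq_le ge_max omega_P_le_M omega_Q_le_M !andbT.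
apply: (ge_omega hs2) => [|x]; last exact: normc_form_M_le.
have [x x1] := exists_unit; apply: (exists_sqnorm_eq1 hs2); exists (phi x 0).
by rewrite sqnorm_phi x1 (sqnorm0 hs1) addr0 mulr1 pnatr_eq0.
Qed.

End DiagonalDecomposition.

Section BlockOperators.
Variables (R : realType) (V : lmodType R[i]) (ip : V -> V -> R[i]).
Hypothesis hip : is_inner_product ip.
Variable A : {linear V -> V}.
Hypotheses (hApos : positive_op ip A) (A_neq0 : exists x, A x != 0).
Variables T S : {linear V -> V}.
Hypotheses (hT : in_BA12 ip A T) (hS : in_BA12 ip A S).

Lemma ipA_positive_form : is_positive_form (ipA ip A).
Proof.
have [ipZDl ip_conj _ _] := hip; split.
- by move=> a x y z; rewrite /ipA linearP ipZDl.
- by move=> a x y z; rewrite /ipA [LHS]ip_conj ipZDl rmorphD rmorphM /= -!ip_conj.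
- by case: hApos.
Qed.

Lemma ipAA_positive_form : is_positive_form (ipAA ip A).
Proof. exact: (prod_positive_form ipA_positive_form). Qed.

Lemma exists_ipA_unit : exists x, sqnorm (ipA ip A) x = 1.
Proof.
apply: (exists_sqnorm_eq1 ipA_positive_form).
have [x Ax0] := A_neq0; exists (A x); apply: contra Ax0 => /eqP AAx0.
have [_ _ _ ip_def] := hip; apply/eqP/ip_def.
exact: (form_sqnorm0r ipA_positive_form x (A x) AAx0).
Qed.

Lemma ipA_numrange_bounded_addZ (P : V -> V) d :
  (forall x, P x = T x + d *: S x) -> numrange_bounded (ipA ip A) P.
Proof.
have [lT _ hT'] := hT; have [lS _ hS'] := hS; move=> PE.
by apply: (numrange_bounded_addZ ipA_positive_form T S P d PE);
  apply: (numrange_bounded_of_norm_le ipA_positive_form); eassumption.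
Qed.

Lemma omega_opmx_sym :
  omega (ipAA ip A) (opmx T S S T)
    = Num.max (omega (ipA ip A) (fun x => T x + S x))
              (omega (ipA ip A) (fun x => T x - S x)).
Proof.
have hs := ipA_positive_form.
apply: (omega_eq_max_diag hs ipAA_positive_form _ _ _ (fun u v => (u + v, u - v))).
- by apply: (ipA_numrange_bounded_addZ _ 1) => x; rewrite scale1r.
- by apply: (ipA_numrange_bounded_addZ _ (-1)) => x; rewrite scaleN1r.
- by move=> a x; rewrite !linearZ -scalerDr.
- by move=> a x; rewrite !linearZ -scalerDr.
- by move=> a [x1 x2]; rewrite /opmx /= !linearZ -!scalerDr.
- move=> [x1 x2]; have [u [v ->]] := exists_sum_scaled_diff 1 (oner_neq0 _) x1 x2.
  by exists u, v; rewrite scale1r.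
- by move=> u v; rewrite /ipAA /= !(formDl hs, formDr hs, formNl hs, formNr hs); ring.
- move=> u v; rewrite /ipAA /opmx /= !(linearD, linearN) /=.
  by rewrite !(formDl hs, formDr hs, formNl hs, formNr hs); ring.
- exact: exists_ipA_unit.
Qed.

Lemma omega_opmx_skew :
  omega (ipAA ip A) (opmx T (fun x => - S x) S T)
    = Num.max (omega (ipA ip A) (fun x => T x + 'i *: S x))
              (omega (ipA ip A) (fun x => T x - 'i *: S x)).
Proof.
have hs := ipA_positive_form.
apply: (omega_eq_max_diag hs ipAA_positive_form _ _ _
  (fun u v => (u + v, - 'i *: (u - v)))).
- exact: (ipA_numrange_bounded_addZ _ 'i).
- by apply: (ipA_numrange_bounded_addZ _ (- 'i)) => x; rewrite scaleNr.
- by move=> a x; rewrite !linearZ /= scalerDr !scalerA mulrC.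
- by move=> a x; rewrite !linearZ /= scalerDr !scalerA mulrC.
- by move=> a [x1 x2]; rewrite /opmx /= !linearZ -!scalerDr.
- move=> [x1 x2]; have ni0 : - 'i != 0 :> R[i] by rewrite oppr_eq0 neq0Ci.
  by have [u [v ->]] := exists_sum_scaled_diff _ ni0 x1 x2; exists u, v.
- move=> u v; rewrite /ipAA /= (formZZ hs) normrN normCi expr1n mul1r.
  by rewrite !(formDl hs, formDr hs, formNl hs, formNr hs); ring.
- move=> u v; rewrite /ipAA /opmx /= !linearZ /= !(formDl hs) (formZZ hs).
  rewrite normrN normCi expr1n mul1r !(linearD, linearN) /=.
  rewrite !(formZl hs, formZr hs, formDl hs, formDr hs, formNl hs, formNr hs).
  by rewrite rmorphN /= conjCi opprK; ring.
- exact: exists_ipA_unit.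
Qed.

End BlockOperators.

Theorem lemma2p5 (R : realType) (V : lmodType R[i]) (ip : V -> V -> R[i])
  (hip : is_inner_product ip) (hcomplete : ip_complete ip)
  (A : {linear V -> V}) (hApos : positive_op ip A) (hA0 : exists x, A x != 0)
  (T S : {linear V -> V})
  (hT : in_BA12 ip A T) (hS : in_BA12 ip A S) :
  omega (ipAA ip A) (opmx T S S T)
    = Num.max (omega (ipA ip A) (fun x => T x + S x))
              (omega (ipA ip A) (fun x => T x - S x))
  /\
  omega (ipAA ip A) (opmx T (fun x => - S x) S T)
    = Num.max (omega (ipA ip A) (fun x => T x + 'i *: S x))
              (omega (ipA ip A) (fun x => T x - 'i *: S x)).
Proof. by split; [exact: omega_opmx_sym | exact: omega_opmx_skew]. Qed.
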